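(* Let $\mathbf{t}_{3/2}=(t_i)_{i\ge 0}$ be the Thue--Morse word in base $3/2$. For integers $n\ge 0$, $N\ge 0$, a letter $c\in\{0,1\}$ and $k\in\mathbb{Z}$, let \[ C_n(c,k,N)=\#\{0\le i<N : t_i=c,\ i\equiv k \pmod{2^n}\}. \] Then for all $n\ge 0$, $c\in\{0,1\}$ and $k\in\mathbb{Z}$, \[ \lim_{N\to\infty}\frac{C_n(c,k,N)}{N}=\frac{1}{2^{n+1}}. \] In particular, the frequency of $0$ (and of $1$) in $\mathbf{t}_{3/2}$, i.e. $\lim_{N\to\infty}\#\{0\le i<N: t_i=c\}/N$, exists and equals $1/2$.
   Context: Base-$3/2$ expansions: $\langle 0\rangle_{3/2}$ is the empty word, and for $n\ge 1$, writing $2n=3m+d$ with integers $m\ge 0$ and $d\in\{0,1,2\}$, one sets $\langle n\rangle_{3/2}=\langle m\rangle_{3/2}\,d$ (so that $n=\sum_i d_i\frac12(\frac32)^i$ with digits $d_i\in\{0,1,2\}$). The Thue--Morse word in base $3/2$ is $\mathbf{t}_{3/2}=(t_n)_{n\ge0}\in\{0,1\}^{\mathbb{N}}$ where $t_n$ is the sum of the digits of $\langle n\rangle_{3/2}$ reduced modulo $2$. Equivalently, it is the unique binary sequence with $t_0=0$ and $t_{3n}=t_{3n+1}=t_{2n}$, $t_{3n+2}=1-t_{2n+1}$ for all $n\ge0$; it begins $001110111110110111110000110110\cdots$. *)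

From Stdlib Require Import Arith ZArith Reals.
From Coquelicot Require Import Coquelicot.

(* Sum of digits of the base-3/2 expansion <n>_{3/2}:
   <0> is the empty word; for n >= 1, write 2n = 3m + d with d in {0,1,2},
   and <n> = <m> d.  Since m < n for n >= 1, recursion with fuel n suffices. *)
Fixpoint digsum32_fuel (fuel n : nat) : nat :=
  match fuel with
  | O => O
  | S f =>
      match n with
      | O => O
      | S _ => digsum32_fuel f ((2 * n) / 3) + (2 * n) mod 3
      end
  end.

Definition digsum32 (n : nat) : nat := digsum32_fuel n n.

Definition t32 (n : nat) : nat := (digsum32 n) mod 2.

Definition C32 (n c : nat) (k : Z) (N : nat) : nat :=
  length (List.filter
    (fun i => Nat.eqb (t32 i) c &&
              Z.eqb (Z.modulo (Z.of_nat i) (2 ^ Z.of_nat n)) (Z.modulo k (2 ^ Z.of_nat n)))%bool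
    (List.seq 0 N)).

(* Write [s_i = (-1)^(t_i)] and let [nu] be the indicator of the residue class of
   [k] mod [2^n].  Then [2 C_n(c,k,N) = sum_(i<N) nu_i +- W(nu, N)] with the twisted
   sum [W(nu, N) = sum_(i<N) nu_i s_i]; the first sum is [N / 2^n + O(1)], so it
   suffices to show [W(nu, N) = o(N)].

   The recurrences [t_(3m) = t_(3m+1) = t_(2m)], [t_(3m+2) = 1 - t_(2m+1)] give
   [W(nu, 3M) = W(T nu, 2M)] for an explicit linear operator [T], which doubles the
   period and the sup norm of [nu].  The energy [sum_(r<P) nu_r^2] over a period
   grows by a factor at most [15] under [T^2], since the correlation terms that
   appear are dominated by the energy.  After [2l] steps the length has shrunk by
   [(4/9)^l], the truncation errors add up to [O(4^l)], and Cauchy-Schwarz over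
   whole periods bounds the remaining sum by
   [W^2 <= (20/27)^l N^2 + O_l(N)], where [20/27 = 4 * 15 / 81 < 1].  Letting
   [N] and then [l] go to infinity gives [W(nu, N) = o(N)]. *)

From Stdlib Require Import Arith ZArith Reals.
From Coquelicot Require Import Coquelicot.
From Stdlib Require Import Lia Lra List.

(* [zify] does not see through [Nat.div] and [Nat.modulo]; cast them to [Z] first. *)
Ltac nat_div_lia :=
  zify; rewrite ?Nat2Z.inj_mod, ?Nat2Z.inj_div in *; zify; Z.div_mod_to_equations; lia.

(** * Digit sums in base 3/2 *)

Section Digits.
Local Open Scope nat_scope.

Lemma digsum32_fuel_enough f f' n :
  n <= f -> n <= f' -> digsum32_fuel f n = digsum32_fuel f' n.
Proof.
  revert f' n; induction f as [|f IH]; intros f' n Hf Hf'.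
  - replace n with 0 by lia; now destruct f'.
  - destruct f' as [|f']; [now replace n with 0 by lia|].
    destruct n as [|n]; [reflexivity|].
    cbn [digsum32_fuel]; f_equal; apply IH; nat_div_lia.
Qed.

Lemma digsum32_step n :
  0 < n -> digsum32 n = digsum32 (2 * n / 3) + (2 * n) mod 3.
Proof.
  intros Hn; unfold digsum32; destruct n as [|n]; [lia|].
  cbn [digsum32_fuel]; f_equal; apply digsum32_fuel_enough; nat_div_lia.
Qed.

Lemma digsum32_last m d :
  d < 3 -> 0 < 3 * m + d ->
  digsum32 (3 * m + d) = digsum32 (2 * m + 2 * d / 3) + (2 * d) mod 3.
Proof.
  intros Hd Hpos; rewrite digsum32_step by lia.
  replace (2 * (3 * m + d) / 3) with (2 * m + 2 * d / 3) by nat_div_lia.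
  now replace (2 * (3 * m + d) mod 3) with ((2 * d) mod 3) by nat_div_lia.
Qed.

Lemma t32_3m m : t32 (3 * m) = t32 (2 * m).
Proof.
  destruct m as [|m]; [reflexivity|].
  unfold t32; rewrite <- (Nat.add_0_r (3 * S m)), digsum32_last by lia.
  now rewrite !Nat.add_0_r.
Qed.

Lemma t32_3m1 m : t32 (3 * m + 1) = t32 (2 * m).
Proof.
  unfold t32; rewrite digsum32_last by lia.
  replace (2 * 1 / 3) with 0 by reflexivity; rewrite Nat.add_0_r.
  replace ((2 * 1) mod 3) with 2 by reflexivity.
  nat_div_lia.
Qed.

Lemma t32_3m2 m : t32 (3 * m + 2) = 1 - t32 (2 * m + 1).
Proof.
  unfold t32; rewrite digsum32_last by lia.
  replace (2 * 2 / 3) with 1 by reflexivity.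
  replace ((2 * 2) mod 3) with 1 by reflexivity.
  nat_div_lia.
Qed.

Lemma t32_le_1 i : t32 i <= 1.
Proof. unfold t32; pose proof (Nat.mod_upper_bound (digsum32 i) 2); lia. Qed.

End Digits.

Section Sign.
Local Open Scope Z_scope.

Definition sign32 (i : nat) : Z := 1 - 2 * Z.of_nat (t32 i).

Lemma sign32_cases i : sign32 i = 1 \/ sign32 i = -1.
Proof. unfold sign32; pose proof (t32_le_1 i); lia. Qed.

Lemma sign32_3m m : sign32 (3 * m) = sign32 (2 * m).
Proof. unfold sign32; now rewrite t32_3m. Qed.

Lemma sign32_3m1 m : sign32 (3 * m + 1) = sign32 (2 * m).
Proof. unfold sign32; now rewrite t32_3m1. Qed.

Lemma sign32_3m2 m : sign32 (3 * m + 2) = - sign32 (2 * m + 1).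
Proof. unfold sign32; rewrite t32_3m2; pose proof (t32_le_1 (2 * m + 1)); lia. Qed.

End Sign.

Section FiniteSums.
Local Open Scope Z_scope.

Fixpoint zsum (f : nat -> Z) (n : nat) : Z :=
  match n with O => 0 | S n => zsum f n + f n end.

Lemma zsum_ext f g n :
  (forall i, (i < n)%nat -> f i = g i) -> zsum f n = zsum g n.
Proof.
  induction n as [|n IH]; intros H; cbn [zsum]; [reflexivity|].
  rewrite IH, H by (intros; try apply H; lia); reflexivity.
Qed.

Lemma zsum_add f g n : zsum (fun i => f i + g i) n = zsum f n + zsum g n.
Proof. induction n; cbn [zsum]; lia. Qed.

Lemma zsum_scal c f n : zsum (fun i => c * f i) n = c * zsum f n.
Proof. induction n as [|n IH]; cbn [zsum]; [ring|]; rewrite IH; ring. Qed.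

Lemma zsum_const c n : zsum (fun _ => c) n = Z.of_nat n * c.
Proof. induction n as [|n IH]; cbn [zsum]; [ring|]; rewrite IH, Nat2Z.inj_succ; ring. Qed.

Lemma zsum_app f a b : zsum f (a + b) = zsum f a + zsum (fun i => f (a + i)%nat) b.
Proof.
  induction b as [|b IH]; cbn [zsum]; [rewrite Nat.add_0_r; ring|].
  rewrite Nat.add_succ_r; cbn [zsum]; rewrite IH; ring.
Qed.

Lemma zsum_pairs f P :
  zsum f (2 * P) = zsum (fun j => f (2 * j)%nat + f (2 * j + 1)%nat) P.
Proof.
  induction P as [|P IH]; [reflexivity|].
  replace (2 * S P)%nat with (S (S (2 * P))) by lia; cbn [zsum].
  rewrite IH, Nat.add_1_r; ring.
Qed.

Lemma zsum_triples f P :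
  zsum f (3 * P) =
  zsum (fun j => f (3 * j)%nat + f (3 * j + 1)%nat + f (3 * j + 2)%nat) P.
Proof.
  induction P as [|P IH]; [reflexivity|].
  replace (3 * S P)%nat with (S (S (S (3 * P)))) by lia; cbn [zsum].
  rewrite IH; replace (S (3 * P)) with (3 * P + 1)%nat by lia.
  replace (S (3 * P + 1)) with (3 * P + 2)%nat by lia; ring.
Qed.

Lemma zsum_le f g n :
  (forall i, (i < n)%nat -> f i <= g i) -> zsum f n <= zsum g n.
Proof.
  induction n as [|n IH]; intros H; cbn [zsum]; [lia|].
  apply Z.add_le_mono; [apply IH; intros; apply H|apply H]; lia.
Qed.

Lemma zsum_nonneg f n : (forall i, 0 <= f i) -> 0 <= zsum f n.
Proof. intros H; induction n; cbn [zsum]; [lia|]; specialize (H n); lia. Qed.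

Lemma zsum_mono f a b :
  (forall i, 0 <= f i) -> (a <= b)%nat -> zsum f a <= zsum f b.
Proof.
  intros H Hab; replace b with (a + (b - a))%nat by lia; rewrite zsum_app.
  pose proof (zsum_nonneg (fun i => f (a + i)%nat) (b - a) (fun i => H _)); lia.
Qed.

Lemma zsum_abs_le f B n :
  (forall i, Z.abs (f i) <= B) -> Z.abs (zsum f n) <= Z.of_nat n * B.
Proof.
  intros H; induction n as [|n IH]; cbn [zsum]; [lia|].
  specialize (H n); rewrite Nat2Z.inj_succ; lia.
Qed.

Lemma zsum_sq_le f N :
  zsum f N * zsum f N <= Z.of_nat N * zsum (fun i => f i * f i) N.
Proof.
  induction N as [|N IH]; cbn [zsum]; [lia|].
  set (s := zsum f N) in *; set (Q := zsum (fun i => f i * f i) N) in *.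
  set (a := f N).
  assert (HQ : 0 <= Q) by (apply zsum_nonneg; intros; nia).
  assert (Hcross : 2 * s * a <= Q + Z.of_nat N * (a * a)).
  { destruct (Nat.eq_dec N 0) as [HN|HN]; [subst s Q; rewrite HN in *; cbn [zsum] in *; nia|].
    apply (Z.mul_le_mono_pos_l _ _ (Z.of_nat N)); [lia|].
    pose proof (Z.square_nonneg (s - Z.of_nat N * a)); nia. }
  rewrite Nat2Z.inj_succ; nia.
Qed.

Definition periodic (g : nat -> Z) (P : nat) : Prop := forall i, g (i + P)%nat = g i.

Lemma periodic_add_mul g P q i : periodic g P -> g (i + q * P)%nat = g i.
Proof.
  intros H; induction q as [|q IH]; [now rewrite Nat.add_0_r|].
  replace (i + S q * P)%nat with (i + q * P + P)%nat by lia; now rewrite H.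
Qed.

Lemma zsum_shift_periodic g P s :
  periodic g P -> zsum (fun r => g (r + s)%nat) P = zsum g P.
Proof.
  intros H.
  assert (Hswap : zsum g (s + P) = zsum g (P + s)) by (f_equal; lia).
  rewrite !zsum_app in Hswap.
  rewrite (zsum_ext (fun i => g (P + i)%nat) g) in Hswap
    by (intros; rewrite Nat.add_comm; apply H).
  rewrite (zsum_ext (fun r => g (r + s)%nat) (fun i => g (s + i)%nat))
    by (intros; f_equal; lia).
  lia.
Qed.

Lemma zsum_periods g P q : periodic g P -> zsum g (q * P) = Z.of_nat q * zsum g P.
Proof.
  intros H; induction q as [|q IH]; [reflexivity|].
  replace (S q * P)%nat with (q * P + P)%nat by lia; rewrite zsum_app, IH.
  rewrite (zsum_ext (fun i => g (q * P + i)%nat) g)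
    by (intros; rewrite Nat.add_comm; apply periodic_add_mul, H).
  rewrite Nat2Z.inj_succ; ring.
Qed.

(* When [3] does not divide [P], exactly one of [r], [r + P], [r + 2P] is a
   multiple of [3], so [j |-> 3j] runs once through every residue mod [P]. *)
Lemma zsum_triples_periodic g P :
  periodic g P -> (P mod 3 <> 0)%nat -> zsum (fun j => g (3 * j)%nat) P = zsum g P.
Proof.
  intros H H3.
  set (h := fun i => if (i mod 3 =? 0)%nat then g i else 0).
  assert (Hh : zsum h (3 * P) = zsum (fun j => g (3 * j)%nat) P).
  { rewrite zsum_triples; apply zsum_ext; intros j _; unfold h.
    replace ((3 * j) mod 3)%nat with 0%nat by nat_div_lia.
    replace ((3 * j + 1) mod 3)%nat with 1%nat by nat_div_lia.
    replace ((3 * j + 2) mod 3)%nat with 2%nat by nat_div_lia; cbn [Nat.eqb]; ring. }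
  rewrite <- Hh; replace (3 * P)%nat with (P + (P + P))%nat by lia.
  rewrite !zsum_app, <- !zsum_add; apply zsum_ext; intros r _; unfold h.
  replace (g (P + r)%nat) with (g r) by (rewrite Nat.add_comm; now rewrite H).
  replace (g (P + (P + r))%nat) with (g r)
    by (replace (P + (P + r))%nat with (r + 2 * P)%nat by lia; now rewrite periodic_add_mul).
  destruct (Nat.eqb_spec (r mod 3) 0), (Nat.eqb_spec ((P + r) mod 3) 0),
    (Nat.eqb_spec ((P + (P + r)) mod 3) 0); try nat_div_lia; ring.
Qed.

Lemma zsum_periodic_bounds g P N :
  (forall i, 0 <= g i) -> periodic g P -> (0 < P)%nat ->
  (Z.of_nat N - Z.of_nat P) * zsum g P <= Z.of_nat P * zsum g N <=
  (Z.of_nat N + Z.of_nat P) * zsum g P.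
Proof.
  intros Hg H HP.
  pose proof (zsum_nonneg g P Hg).
  pose proof (zsum_mono g (N / P * P) N Hg ltac:(nat_div_lia)) as Hlow.
  pose proof (zsum_mono g N (S (N / P) * P) Hg ltac:(nat_div_lia)) as Hup.
  rewrite zsum_periods in Hlow, Hup by exact H.
  assert (Z.of_nat N - Z.of_nat P <= Z.of_nat (N / P) * Z.of_nat P) by nat_div_lia.
  assert (Z.of_nat (S (N / P)) * Z.of_nat P <= Z.of_nat N + Z.of_nat P) by nat_div_lia.
  split; nia.
Qed.

End FiniteSums.

(** * The transfer operator *)

Section Transfer.
Local Open Scope Z_scope.

(* Grouping [i < 3M] into blocks [3j, 3j+1, 3j+2] and using the recurrences of
   [sign32] turns a weighted sum of signs over [3M] terms into one over [2M]
   terms, with the weights transformed by [transfer]. *)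
Definition transfer (nu : nat -> Z) (i : nat) : Z :=
  if Nat.even i then nu (3 * (i / 2))%nat + nu (3 * (i / 2) + 1)%nat
  else - nu (3 * (i / 2) + 2)%nat.

Definition twisted_sum (nu : nat -> Z) (N : nat) : Z := zsum (fun i => nu i * sign32 i) N.

Lemma transfer_even nu j : transfer nu (2 * j) = nu (3 * j)%nat + nu (3 * j + 1)%nat.
Proof.
  unfold transfer; rewrite Nat.even_mul; cbn [Nat.even orb].
  now replace (2 * j / 2)%nat with j by nat_div_lia.
Qed.

Lemma transfer_odd nu j : transfer nu (2 * j + 1) = - nu (3 * j + 2)%nat.
Proof.
  unfold transfer; rewrite Nat.even_add, Nat.even_mul; cbn [Nat.even orb Bool.eqb].
  now replace ((2 * j + 1) / 2)%nat with j by nat_div_lia.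
Qed.

Lemma twisted_sum_transfer nu M :
  twisted_sum nu (3 * M) = twisted_sum (transfer nu) (2 * M).
Proof.
  unfold twisted_sum; rewrite zsum_triples, zsum_pairs; apply zsum_ext; intros j _.
  rewrite transfer_even, transfer_odd, sign32_3m, sign32_3m1, sign32_3m2; ring.
Qed.

Lemma transfer_periodic nu P : periodic nu P -> periodic (transfer nu) (2 * P).
Proof.
  intros H i; unfold transfer.
  replace (Nat.even (i + 2 * P)) with (Nat.even i)
    by (rewrite Nat.even_add, Nat.even_mul; now destruct (Nat.even i)).
  replace ((i + 2 * P) / 2)%nat with (i / 2 + P)%nat by nat_div_lia.
  replace (3 * (i / 2 + P))%nat with (3 * (i / 2) + 3 * P)%nat by lia.
  replace (3 * (i / 2) + 3 * P + 1)%nat with (3 * (i / 2) + 1 + 3 * P)%nat by lia.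
  replace (3 * (i / 2) + 3 * P + 2)%nat with (3 * (i / 2) + 2 + 3 * P)%nat by lia.
  now rewrite !periodic_add_mul by exact H.
Qed.

Lemma transfer_abs_le nu B :
  (forall i, Z.abs (nu i) <= B) -> forall i, Z.abs (transfer nu i) <= 2 * B.
Proof.
  intros H i; pose proof (H 0%nat); unfold transfer; destruct (Nat.even i).
  - pose proof (H (3 * (i / 2))%nat); pose proof (H (3 * (i / 2) + 1)%nat); lia.
  - pose proof (H (3 * (i / 2) + 2)%nat); lia.
Qed.

Definition shrink (N : nat) : nat := (2 * (N / 3))%nat.

Lemma twisted_sum_transfer_error nu B N :
  (forall i, Z.abs (nu i) <= B) ->
  Z.abs (twisted_sum nu N - twisted_sum (transfer nu) (shrink N)) <= 2 * B.
Proof.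
  intros H; unfold shrink; rewrite <- twisted_sum_transfer; unfold twisted_sum.
  rewrite (Nat.div_mod_eq N 3) at 1; rewrite zsum_app.
  assert (Htail : Z.abs (zsum (fun i => nu (3 * (N / 3) + i)%nat * sign32 (3 * (N / 3) + i))
                            (N mod 3)) <= Z.of_nat (N mod 3) * B).
  { apply zsum_abs_le; intros i.
    specialize (H (3 * (N / 3) + i)%nat).
    destruct (sign32_cases (3 * (N / 3) + i)) as [-> | ->]; lia. }
  assert (Z.of_nat (N mod 3) <= 2) by nat_div_lia.
  pose proof (H 0%nat); nia.
Qed.

Definition corr (nu : nat -> Z) (P h : nat) : Z := zsum (fun r => nu r * nu (r + h)%nat) P.

Lemma zsum_triples_corr nu P a h :
  periodic nu P -> (P mod 3 <> 0)%nat ->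
  zsum (fun j => nu (3 * j + a)%nat * nu (3 * j + a + h)%nat) P = corr nu P h.
Proof.
  intros H H3.
  set (g := fun r => nu r * nu (r + h)%nat).
  assert (Hg : periodic g P).
  { intros i; unfold g; replace (i + P + h)%nat with (i + h + P)%nat by lia; now rewrite !H. }
  rewrite (zsum_ext _ (fun j => g (3 * j + a)%nat)) by reflexivity.
  rewrite (zsum_triples_periodic (fun r => g (r + a)%nat))
    by (auto; intros i; replace (i + P + a)%nat with (i + a + P)%nat by lia; apply Hg).
  apply zsum_shift_periodic, Hg.
Qed.

Lemma corr_transfer_0 nu P :
  periodic nu P -> (P mod 3 <> 0)%nat ->
  corr (transfer nu) (2 * P) 0 = 3 * corr nu P 0 + 2 * corr nu P 1.
Proof.
  intros H H3; unfold corr at 1; rewrite zsum_pairs.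
  rewrite (zsum_ext _ (fun j =>
      nu (3 * j + 0)%nat * nu (3 * j + 0 + 0)%nat + nu (3 * j + 1)%nat * nu (3 * j + 1 + 0)%nat
    + nu (3 * j + 2)%nat * nu (3 * j + 2 + 0)%nat
    + 2 * (nu (3 * j + 0)%nat * nu (3 * j + 0 + 1)%nat))).
  - rewrite !zsum_add, zsum_scal, !zsum_triples_corr by assumption; ring.
  - intros j _; rewrite !Nat.add_0_r, transfer_even, transfer_odd; ring.
Qed.

Lemma corr_transfer_1 nu P :
  periodic nu P -> (P mod 3 <> 0)%nat ->
  corr (transfer nu) (2 * P) 1 = - 2 * corr nu P 1 - 2 * corr nu P 2.
Proof.
  intros H H3; unfold corr at 1; rewrite zsum_pairs.
  rewrite (zsum_ext _ (fun j => -1 * (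
      nu (3 * j + 0)%nat * nu (3 * j + 0 + 2)%nat + nu (3 * j + 1)%nat * nu (3 * j + 1 + 1)%nat
    + nu (3 * j + 2)%nat * nu (3 * j + 2 + 1)%nat + nu (3 * j + 2)%nat * nu (3 * j + 2 + 2)%nat))).
  - rewrite zsum_scal, !zsum_add, !zsum_triples_corr by assumption; ring.
  - intros j _.
    replace (2 * j + 1 + 1)%nat with (2 * (j + 1))%nat by lia.
    rewrite !transfer_even, transfer_odd.
    replace (3 * (j + 1) + 1)%nat with (3 * j + 2 + 2)%nat by lia.
    replace (3 * (j + 1))%nat with (3 * j + 2 + 1)%nat by lia.
    rewrite !Nat.add_0_r; replace (3 * j + 1 + 1)%nat with (3 * j + 2)%nat by lia; ring.
Qed.

Lemma corr_abs_le nu P h : periodic nu P -> Z.abs (corr nu P h) <= corr nu P 0.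
Proof.
  intros H.
  assert (Hc0 : corr nu P 0 = zsum (fun r => nu r * nu r) P).
  { apply zsum_ext; intros; now rewrite Nat.add_0_r. }
  assert (Hshift : zsum (fun r => nu (r + h)%nat * nu (r + h)%nat) P = corr nu P 0).
  { rewrite Hc0; apply (zsum_shift_periodic (fun r => nu r * nu r)).
    intros i; now rewrite H. }
  assert (Hsum : 2 * corr nu P 0 =
                 zsum (fun r => nu r * nu r + nu (r + h)%nat * nu (r + h)%nat) P).
  { rewrite zsum_add, Hshift, <- Hc0; ring. }
  assert (zsum (fun r => 2 * (nu r * nu (r + h)%nat)) P <= 2 * corr nu P 0).
  { rewrite Hsum; apply zsum_le; intros r _.
    pose proof (Z.square_nonneg (nu r - nu (r + h)%nat)); nia. }
  assert (zsum (fun r => -2 * (nu r * nu (r + h)%nat)) P <= 2 * corr nu P 0).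
  { rewrite Hsum; apply zsum_le; intros r _.
    pose proof (Z.square_nonneg (nu r + nu (r + h)%nat)); nia. }
  rewrite !zsum_scal in *; unfold corr at 1; lia.
Qed.

(* With [c_h := corr nu P h] the left side is [9 c_0 + 2 c_1 - 4 c_2], and [|c_h| <= c_0]. *)
Lemma corr_transfer2_le nu P :
  periodic nu P -> (P mod 3 <> 0)%nat ->
  corr (transfer (transfer nu)) (4 * P) 0 <= 15 * corr nu P 0.
Proof.
  intros H H3; replace (4 * P)%nat with (2 * (2 * P))%nat by lia.
  rewrite corr_transfer_0 by (try apply transfer_periodic; auto; nat_div_lia).
  rewrite corr_transfer_0, corr_transfer_1 by assumption.
  pose proof (corr_abs_le nu P 1 H); pose proof (corr_abs_le nu P 2 H); lia.
Qed.

Lemma twisted_sum_iter_error L nu B N :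
  (forall i, Z.abs (nu i) <= B) ->
  Z.abs (twisted_sum nu N - twisted_sum (Nat.iter L transfer nu) (Nat.iter L shrink N))
  <= 2 * B * (2 ^ Z.of_nat L - 1).
Proof.
  revert nu B N; induction L as [|L IH]; intros nu B N H.
  { cbn [Nat.iter Z.of_nat]; rewrite Z.sub_diag, Z.pow_0_r; lia. }
  rewrite !Nat.iter_succ_r.
  pose proof (twisted_sum_transfer_error nu B N H).
  pose proof (IH (transfer nu) (2 * B) (shrink N) (transfer_abs_le nu B H)).
  pose proof (Z.pow_pos_nonneg 2 (Z.of_nat L) ltac:(lia) ltac:(lia)); pose proof (H 0%nat).
  rewrite Nat2Z.inj_succ, Z.pow_succ_r by lia; nia.
Qed.

Lemma iter_shrink_le L N : (3 ^ L * Nat.iter L shrink N <= 2 ^ L * N)%nat.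
Proof.
  revert N; induction L as [|L IH]; intros N; [simpl; lia|].
  rewrite Nat.iter_succ_r, !Nat.pow_succ_r'.
  assert (3 * shrink N <= 2 * N)%nat by (unfold shrink; nat_div_lia).
  specialize (IH (shrink N)); nia.
Qed.

Lemma iter_transfer_periodic L nu P :
  periodic nu P -> periodic (Nat.iter L transfer nu) (2 ^ L * P).
Proof.
  intros H; induction L as [|L IH].
  - now rewrite Nat.pow_0_r, Nat.mul_1_l.
  - rewrite Nat.iter_succ, Nat.pow_succ_r', <- Nat.mul_assoc.
    apply transfer_periodic, IH.
Qed.

Lemma corr_iter_transfer_le l nu P :
  periodic nu P -> (P mod 3 <> 0)%nat ->
  corr (Nat.iter (2 * l) transfer nu) (4 ^ l * P) 0 <= 15 ^ Z.of_nat l * corr nu P 0.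
Proof.
  revert nu P; induction l as [|l IH]; intros nu P H H3.
  { rewrite Nat.mul_0_r, Nat.pow_0_r, Nat.mul_1_l, Z.pow_0_r, Z.mul_1_l; apply Z.le_refl. }
  replace (2 * S l)%nat with (2 * l + 2)%nat by lia.
  rewrite Nat.iter_add; change (Nat.iter 2 transfer nu) with (transfer (transfer nu)).
  replace (4 ^ S l * P)%nat with (4 ^ l * (4 * P))%nat by (rewrite Nat.pow_succ_r'; ring).
  assert (H4 : periodic (transfer (transfer nu)) (4 * P)).
  { replace (4 * P)%nat with (2 * (2 * P))%nat by lia; now do 2 apply transfer_periodic. }
  pose proof (IH _ _ H4 ltac:(nat_div_lia)).
  pose proof (corr_transfer2_le nu P H H3).
  pose proof (Z.pow_nonneg 15 (Z.of_nat l) ltac:(lia)).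
  rewrite Nat2Z.inj_succ, Z.pow_succ_r by lia; nia.
Qed.

Lemma twisted_sum_sq_le nu P N :
  periodic nu P -> (0 < P)%nat ->
  Z.of_nat P * (twisted_sum nu N * twisted_sum nu N)
  <= Z.of_nat N * (Z.of_nat N + Z.of_nat P) * corr nu P 0.
Proof.
  intros H HP.
  set (sq := fun r => nu r * nu r).
  assert (Hsq : forall i, 0 <= sq i) by (intros; unfold sq; nia).
  assert (HCS : twisted_sum nu N * twisted_sum nu N <= Z.of_nat N * zsum sq N).
  { unfold twisted_sum; rewrite (zsum_ext sq (fun i => (nu i * sign32 i) * (nu i * sign32 i)));
      [apply zsum_sq_le|].
    intros i _; unfold sq; destruct (sign32_cases i) as [-> | ->]; ring. }
  assert (Hc0 : corr nu P 0 = zsum sq P) by (apply zsum_ext; intros; now rewrite Nat.add_0_r).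
  destruct (zsum_periodic_bounds sq P N Hsq) as [_ Hup]; [intros i; unfold sq; now rewrite H|lia|].
  pose proof (zsum_nonneg sq N Hsq); nia.
Qed.

Lemma corr0_le nu P B : (forall i, Z.abs (nu i) <= B) -> corr nu P 0 <= Z.of_nat P * (B * B).
Proof.
  intros H; rewrite <- zsum_const; apply zsum_le; intros i _.
  rewrite Nat.add_0_r; specialize (H i); nia.
Qed.

Lemma twisted_sum_iter_sq_le nu P B l N :
  periodic nu P -> (0 < P)%nat -> (P mod 3 <> 0)%nat -> (forall i, Z.abs (nu i) <= B) ->
  let NL := Z.of_nat (Nat.iter (2 * l) shrink N) in
  let wL := twisted_sum (Nat.iter (2 * l) transfer nu) (Nat.iter (2 * l) shrink N) in
  4 ^ Z.of_nat l * (wL * wL)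
  <= NL * (NL + 4 ^ Z.of_nat l * Z.of_nat P) * (15 ^ Z.of_nat l * (B * B)).
Proof.
  intros H HP H3 HB NL wL.
  assert (HperL : periodic (Nat.iter (2 * l) transfer nu) (4 ^ l * P)).
  { replace (4 ^ l)%nat with (2 ^ (2 * l))%nat by (now rewrite Nat.pow_mul_r).
    now apply iter_transfer_periodic. }
  assert (HPL : (0 < 4 ^ l * P)%nat) by (pose proof (Nat.pow_nonzero 4 l); lia).
  pose proof (twisted_sum_sq_le _ _ (Nat.iter (2 * l) shrink N) HperL HPL) as Hsq.
  pose proof (corr_iter_transfer_le l nu P H H3) as HcL.
  pose proof (corr0_le nu P B HB) as Hc0.
  rewrite Nat2Z.inj_mul, Nat2Z.inj_pow in Hsq; change (Z.of_nat 4) with 4 in Hsq.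
  assert (Ha : 0 < 4 ^ Z.of_nat l) by (apply Z.pow_pos_nonneg; lia).
  assert (Hf : 0 <= 15 ^ Z.of_nat l) by (apply Z.pow_nonneg; lia).
  assert (HNL : 0 <= NL) by lia.
  revert Hsq HcL Ha Hf; generalize (4 ^ Z.of_nat l), (15 ^ Z.of_nat l),
    (corr (Nat.iter (2 * l) transfer nu) (4 ^ l * P) 0); intros a f cL Hsq HcL Ha Hf.
  apply (Z.mul_le_mono_pos_l _ _ (Z.of_nat P)); [lia|].
  assert (HcL' : cL <= f * (Z.of_nat P * (B * B)))
    by (eapply Z.le_trans; [exact HcL|]; apply Z.mul_le_mono_nonneg_l; assumption).
  assert (HK : 0 <= NL * (NL + a * Z.of_nat P)) by nia.
  pose proof (Z.mul_le_mono_nonneg_l _ _ _ HK HcL'); nia.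
Qed.

End Transfer.

(** * Counting in residue classes *)

Section Counting.
Local Open Scope Z_scope.

Definition residue_ind (P r i : nat) : Z := if (i mod P =? r)%nat then 1 else 0.

Lemma residue_ind_periodic P r : (0 < P)%nat -> periodic (residue_ind P r) P.
Proof.
  intros HP i; unfold residue_ind.
  now rewrite <- (Nat.mul_1_l P) at 1; rewrite Nat.Div0.mod_add.
Qed.

Lemma residue_ind_bounds P r i : 0 <= residue_ind P r i <= 1.
Proof. unfold residue_ind; destruct (_ =? _)%nat; lia. Qed.

Lemma zsum_residue_ind_period P r : (r < P)%nat -> zsum (residue_ind P r) P = 1.
Proof.
  intros Hr.
  assert (Hprefix : forall m, (m <= P)%nat ->
                    zsum (residue_ind P r) m = if (r <? m)%nat then 1 else 0).
  { induction m as [|m IH]; intros Hm; cbn [zsum]; [reflexivity|].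
    rewrite IH by lia; unfold residue_ind; rewrite Nat.mod_small by lia.
    destruct (Nat.ltb_spec r m), (Nat.ltb_spec r (S m)), (Nat.eqb_spec m r); lia. }
  rewrite Hprefix by lia; destruct (Nat.ltb_spec r P); lia.
Qed.

Lemma pow2_mod3 n : ((2 ^ n) mod 3 <> 0)%nat.
Proof.
  induction n as [|n IH]; [discriminate|].
  rewrite Nat.pow_succ_r'; revert IH; generalize (2 ^ n)%nat; intros; nat_div_lia.
Qed.

Lemma residue_mod_lt n k : (Z.to_nat (k mod 2 ^ Z.of_nat n) < 2 ^ n)%nat.
Proof.
  assert (Hpos : 0 < 2 ^ Z.of_nat n) by (apply Z.pow_pos_nonneg; lia).
  pose proof (Z.mod_pos_bound k _ Hpos); apply Nat2Z.inj_lt.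
  rewrite Z2Nat.id, Nat2Z.inj_pow by lia; lia.
Qed.

Lemma length_filter_seq (p : nat -> bool) N :
  Z.of_nat (length (filter p (seq 0 N))) = zsum (fun i => if p i then 1 else 0) N.
Proof.
  induction N as [|N IH]; [reflexivity|].
  rewrite seq_S, filter_app, length_app, Nat2Z.inj_add, IH; cbn [zsum filter Nat.add].
  destruct (p N); cbn [length]; lia.
Qed.

(* For [c] and [t] in [{0, 1}]: [2 [t = c] = 1 + (1 - 2c)(1 - 2t)]. *)
Lemma C32_twisted n c k N :
  (c <= 1)%nat ->
  let nu := residue_ind (2 ^ n) (Z.to_nat (k mod 2 ^ Z.of_nat n)) in
  2 * Z.of_nat (C32 n c k N) = zsum nu N + (1 - 2 * Z.of_nat c) * twisted_sum nu N.
Proof.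
  intros Hc nu; unfold C32; rewrite length_filter_seq; unfold twisted_sum.
  rewrite <- !zsum_scal, <- zsum_add; apply zsum_ext; intros i _.
  set (r := Z.to_nat (k mod 2 ^ Z.of_nat n)) in nu.
  assert (Hr : Z.of_nat r = k mod 2 ^ Z.of_nat n).
  { apply Z2Nat.id, Z.mod_pos_bound, Z.pow_pos_nonneg; lia. }
  assert (Hi : Z.of_nat i mod 2 ^ Z.of_nat n = Z.of_nat (i mod 2 ^ n))
    by (now rewrite Nat2Z.inj_mod, Nat2Z.inj_pow).
  assert (Hmod : (Z.of_nat i mod 2 ^ Z.of_nat n =? k mod 2 ^ Z.of_nat n) = (i mod 2 ^ n =? r)%nat).
  { rewrite Hi, <- Hr.
    destruct (Z.eqb_spec (Z.of_nat (i mod 2 ^ n)) (Z.of_nat r)), (Nat.eqb_spec (i mod 2 ^ n) r);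
      lia. }
  rewrite Hmod; unfold nu, residue_ind, sign32.
  assert (Ht : (t32 i = 0 \/ t32 i = 1)%nat) by (pose proof (t32_le_1 i); lia).
  assert (Hc' : (c = 0 \/ c = 1)%nat) by lia.
  destruct (_ =? _)%nat; cbn [andb];
    destruct Ht as [-> | ->], Hc' as [-> | ->]; cbn; lia.
Qed.

End Counting.

Section Limits.
Local Open Scope R_scope.

Lemma sq_le_rescaled (w n N a g c K : R) :
  0 < a -> 0 < g -> 0 <= n -> 0 <= c -> 0 <= K ->
  g * n <= a * N -> a * w ^ 2 <= n * (n + a * c) * K ->
  w ^ 2 <= K * (a / (g * g) * N ^ 2 + a / g * c * N).
Proof.
  intros Ha Hg Hn Hc HK Hshrink Hw.
  set (m := a * N / g).
  assert (Hnm : n <= m) by (unfold m; apply Rmult_le_reg_l with g; [lra|]; field_simplify; lra).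
  assert (Hmono : n * (n + a * c) * K <= m * (m + a * c) * K).
  { apply Rmult_le_compat_r; [lra|]; apply Rmult_le_compat; nra. }
  apply Rmult_le_reg_l with a; [lra|].
  replace (a * (K * (a / (g * g) * N ^ 2 + a / g * c * N))) with (m * (m + a * c) * K)
    by (unfold m; field; lra).
  lra.
Qed.

Lemma pow_ratio_20_27 l : 4 ^ l / (9 ^ l * 9 ^ l) * 15 ^ l = (20 / 27) ^ l.
Proof.
  assert (E : (20 / 27) ^ l * (9 ^ l * 9 ^ l) = 4 ^ l * 15 ^ l)
    by (rewrite <- !Rpow_mult_distr; f_equal; lra).
  pose proof (pow_nonzero 9 l ltac:(lra)).
  apply Rmult_eq_reg_r with (9 ^ l * 9 ^ l); [rewrite E; field; auto|].
  apply Rmult_integral_contrapositive; auto.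
Qed.

Lemma pow_ratio_20_3 l : 4 ^ l / 9 ^ l * 15 ^ l = (20 / 3) ^ l.
Proof.
  assert (E : (20 / 3) ^ l * 9 ^ l = 4 ^ l * 15 ^ l)
    by (rewrite <- !Rpow_mult_distr; f_equal; lra).
  pose proof (pow_nonzero 9 l ltac:(lra)).
  apply Rmult_eq_reg_r with (9 ^ l); [rewrite E; field|]; auto.
Qed.

Lemma twisted_sum_approx nu P B l N :
  periodic nu P -> (0 < P)%nat -> (P mod 3 <> 0)%nat -> (forall i, (Z.abs (nu i) <= B)%Z) ->
  exists w, Rabs (IZR (twisted_sum nu N) - w) <= 2 * IZR B * 4 ^ l /\
            w ^ 2 <= IZR B ^ 2 * (20 / 27) ^ l * INR N ^ 2
                     + IZR B ^ 2 * (20 / 3) ^ l * INR P * INR N.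
Proof.
  intros H HP H3 HB.
  assert (HB0 : 0 <= IZR B) by (apply IZR_le; specialize (HB 0%nat); lia).
  exists (IZR (twisted_sum (Nat.iter (2 * l) transfer nu) (Nat.iter (2 * l) shrink N))).
  split.
  - pose proof (twisted_sum_iter_error (2 * l) nu B N HB) as E.
    apply IZR_le in E; rewrite abs_IZR, minus_IZR, !mult_IZR, minus_IZR, <- pow_IZR in E.
    rewrite pow_mult in E; replace (IZR 2 ^ 2) with 4 in E by (cbn; lra).
    pose proof (pow_le 4 l ltac:(lra)); nra.
  - pose proof (twisted_sum_iter_sq_le nu P B l N H HP H3 HB) as S; cbv zeta in S.
    apply IZR_le in S; rewrite !mult_IZR, !plus_IZR, !mult_IZR, <- !pow_IZR, <- !INR_IZR_INZ in S.
    pose proof (iter_shrink_le (2 * l) N) as Sh.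
    apply le_INR in Sh; rewrite !mult_INR, !pow_INR, !pow_mult in Sh.
    replace (INR 3 ^ 2) with 9 in Sh by (cbn; lra); replace (INR 2 ^ 2) with 4 in Sh by (cbn; lra).
    set (w := IZR (twisted_sum _ _)) in *; set (n := INR (Nat.iter (2 * l) shrink N)) in *.
    rewrite <- pow_ratio_20_27, <- pow_ratio_20_3.
    replace (_ + _) with ((15 ^ l * (IZR B * IZR B)) *
      (4 ^ l / (9 ^ l * 9 ^ l) * INR N ^ 2 + 4 ^ l / 9 ^ l * INR P * INR N)) by ring.
    pose proof (pow_lt 15 l ltac:(lra)).
    apply sq_le_rescaled with n; try apply pos_INR; try apply pow_lt; nra.
Qed.

Lemma eventually_INR_gt (X : R) : eventually (fun N => X < INR N).
Proof. exact (proj2 (is_lim_seq_spec INR p_infty) is_lim_seq_INR X). Qed.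

Lemma exists_mul_pow_le (q b y : R) :
  0 <= q < 1 -> 0 <= b -> 0 < y -> exists l, b * q ^ l <= y.
Proof.
  intros Hq Hb Hy.
  destruct (pow_lt_1_zero q ltac:(rewrite Rabs_right; lra) (y / (b + 1))
              ltac:(apply Rdiv_lt_0_compat; lra)) as [l Hl].
  exists l; specialize (Hl l (le_n l)).
  rewrite Rabs_right in Hl by (apply Rle_ge, pow_le; lra).
  apply Rlt_div_r in Hl; [|lra].
  pose proof (pow_le q l (proj1 Hq)); nra.
Qed.

Lemma abs_lt_of_approx (x w d q r e M : R) :
  0 < e -> 0 < M -> Rabs (x - w) <= d -> w ^ 2 <= q * M ^ 2 + r * M ->
  d < e * M -> q <= e ^ 2 / 2 -> 2 * r < e ^ 2 * M -> Rabs x < 2 * e * M.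
Proof.
  intros He HM Hxw Hw Hd Hq Hr.
  assert (Hw2 : w ^ 2 <= (e * M) ^ 2).
  { assert (q * M ^ 2 <= e ^ 2 / 2 * M ^ 2) by (apply Rmult_le_compat_r; [apply pow2_ge_0|lra]).
    assert (2 * r * M <= e ^ 2 * M * M) by (apply Rmult_le_compat_r; lra).
    lra. }
  assert (Rabs w <= e * M).
  { rewrite <- (Rabs_right (e * M)) by nra; apply Rsqr_le_abs_0; unfold Rsqr; lra. }
  pose proof (Rabs_triang (x - w) w); replace (x - w + w) with x in * by ring; lra.
Qed.

Lemma twisted_sum_negligible nu P B :
  periodic nu P -> (0 < P)%nat -> (P mod 3 <> 0)%nat -> (forall i, (Z.abs (nu i) <= B)%Z) ->
  is_lim_seq (fun N => IZR (twisted_sum nu N) / INR N) 0.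
Proof.
  intros H HP H3 HB; apply is_lim_seq_spec; intros [eps Heps]; cbn.
  set (e := eps / 2); set (b := IZR B ^ 2).
  destruct (exists_mul_pow_le (20 / 27) b (e ^ 2 / 2)) as [l Hl];
    [lra|apply pow2_ge_0|unfold e; nra|].
  set (r := b * (20 / 3) ^ l * INR P); set (d := 2 * IZR B * 4 ^ l).
  apply (filter_imp (fun N => 2 * r / e ^ 2 < INR N /\ d / e < INR N /\ 0 < INR N));
    [|repeat apply filter_and; apply eventually_INR_gt].
  intros N (HNr & HNd & HN).
  apply Rlt_div_l in HNr; [|unfold e; nra]; apply Rlt_div_l in HNd; [|unfold e; lra].
  destruct (twisted_sum_approx nu P B l N H HP H3 HB) as [w [Hw Hsq]].
  fold d in Hw; fold b in Hsq; fold r in Hsq.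
  rewrite Rminus_0_r, Rabs_div, (Rabs_right (INR N)) by lra; apply Rlt_div_l; [lra|].
  replace (eps * INR N) with (2 * e * INR N) by (unfold e; lra).
  apply abs_lt_of_approx with w d (b * (20 / 27) ^ l) r; auto; unfold e in *; lra.
Qed.

Lemma is_lim_seq_div_INR (c : R) : is_lim_seq (fun N => c / INR N) 0.
Proof.
  pose proof (is_lim_seq_scal_l _ c _ (is_lim_seq_inv _ _ is_lim_seq_INR ltac:(discriminate))) as L.
  cbn in L; rewrite Rmult_0_r in L; exact L.
Qed.

Lemma is_lim_seq_periodic_mean g P :
  (forall i, (0 <= g i)%Z) -> periodic g P -> (0 < P)%nat ->
  is_lim_seq (fun N => IZR (zsum g N) / INR N) (IZR (zsum g P) / INR P).
Proof.
  intros Hg H HP.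
  set (s := IZR (zsum g P)); set (m := s / INR P).
  assert (HPr : 0 < INR P) by (apply lt_0_INR; exact HP).
  apply is_lim_seq_le_le_loc with (u := fun N => m - s / INR N) (w := fun N => m + s / INR N).
  - apply (filter_imp (fun N => 0 < INR N)); [|apply eventually_INR_gt].
    intros N HN; destruct (zsum_periodic_bounds g P N Hg H HP) as [Hlo Hup].
    apply IZR_le in Hlo, Hup.
    rewrite !mult_IZR, minus_IZR, <- !INR_IZR_INZ in Hlo.
    rewrite !mult_IZR, plus_IZR, <- !INR_IZR_INZ in Hup; fold s in Hlo, Hup.
    assert (HPN : 0 < / (INR P * INR N)) by (apply Rinv_0_lt_compat, Rmult_lt_0_compat; lra).
    replace (m - s / INR N) with ((INR N - INR P) * s * / (INR P * INR N))
      by (unfold m; field; lra).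
    replace (m + s / INR N) with ((INR N + INR P) * s * / (INR P * INR N))
      by (unfold m; field; lra).
    replace (IZR (zsum g N) / INR N) with (INR P * IZR (zsum g N) * / (INR P * INR N))
      by (field; lra).
    split; apply Rmult_le_compat_r; lra.
  - pose proof (is_lim_seq_minus' _ _ _ _ (is_lim_seq_const m) (is_lim_seq_div_INR s)) as L.
    rewrite Rminus_0_r in L; exact L.
  - pose proof (is_lim_seq_plus' _ _ _ _ (is_lim_seq_const m) (is_lim_seq_div_INR s)) as L.
    rewrite Rplus_0_r in L; exact L.
Qed.

Lemma is_lim_seq_residue_density P r :
  (r < P)%nat -> is_lim_seq (fun N => IZR (zsum (residue_ind P r) N) / INR N) (1 / INR P).
Proof.
  intros Hr; rewrite <- (zsum_residue_ind_period P r Hr).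
  apply is_lim_seq_periodic_mean; [|apply residue_ind_periodic|]; try lia.
  intros i; apply residue_ind_bounds.
Qed.

Lemma twisted_sum_residue_negligible n r :
  is_lim_seq (fun N => IZR (twisted_sum (residue_ind (2 ^ n) r) N) / INR N) 0.
Proof.
  assert (HP : (0 < 2 ^ n)%nat) by (apply Nat.neq_0_lt_0, Nat.pow_nonzero; lia).
  apply twisted_sum_negligible with (2 ^ n)%nat 1%Z; auto using residue_ind_periodic, pow2_mod3.
  intros i; pose proof (residue_ind_bounds (2 ^ n) r i); lia.
Qed.

Lemma C32_ratio n c k N :
  (c <= 1)%nat ->
  let nu := residue_ind (2 ^ n) (Z.to_nat (k mod 2 ^ Z.of_nat n)) in
  INR (C32 n c k N) / INR N =
  / 2 * (IZR (zsum nu N) / INR N) + (1 - 2 * INR c) / 2 * (IZR (twisted_sum nu N) / INR N).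
Proof.
  intros Hc nu; pose proof (C32_twisted n c k N Hc) as E; cbv zeta in E; fold nu in E.
  apply (f_equal IZR) in E.
  rewrite mult_IZR, plus_IZR, mult_IZR, minus_IZR, mult_IZR, <- !INR_IZR_INZ in E.
  replace (INR (C32 n c k N)) with
    (/ 2 * (IZR (zsum nu N) + (1 - 2 * INR c) * IZR (twisted_sum nu N))) by lra.
  unfold Rdiv; ring.
Qed.

End Limits.

Theorem theorem18 :
  forall (n c : nat) (k : Z), (c <= 1)%nat ->
    is_lim_seq (fun N : nat => INR (C32 n c k N) / INR N)
               (Rbar.Finite (1 / 2 ^ (n + 1))).
Proof.
  intros n c k Hc.
  set (r := Z.to_nat (k mod 2 ^ Z.of_nat n)).
  pose proof (is_lim_seq_plus' _ _ _ _
    (is_lim_seq_scal_l _ (/ 2) _ (is_lim_seq_residue_density _ r (residue_mod_lt n k)))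
    (is_lim_seq_scal_l _ ((1 - 2 * INR c) / 2) _ (twisted_sum_residue_negligible n r))) as L.
  replace (1 / 2 ^ (n + 1)) with (/ 2 * (1 / INR (2 ^ n)) + (1 - 2 * INR c) / 2 * 0).
  - exact (is_lim_seq_ext _ _ _ (fun N => eq_sym (C32_ratio n c k N Hc)) L).
  - rewrite pow_INR, pow_add, pow_1; replace (INR 2) with 2 by (cbn; lra).
    pose proof (pow_nonzero 2 n ltac:(lra)); unfold Rdiv; field; assumption.
Qed.
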